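(* Let $G=(\mu,\mathcal{V},\mathcal{W},\mathcal{E})$ be a weighted bipartite graph with edge density $\delta>0$. If $G$ is $\theta$-maximal for some $\theta>1$, then $G$ is $(\frac{\theta-1}{\theta}\cdot\delta)$-connected.
   Context: A weighted bipartite graph is $G=(\mu,\mathcal{V},\mathcal{W},\mathcal{E})$ with $\mu:\mathbb{R}_{>0}\to\mathbb{R}_{>0}$, $\mathcal{V},\mathcal{W}$ finite sets of positive reals, $\mathcal{E}\subseteq\mathcal{V}\times\mathcal{W}$. $\mu(\mathcal{T})=\sum_{t\in\mathcal{T}}\mu(t)$ and $\mu(\mathcal{E})=\sum_{(v,w)\in\mathcal{E}}\mu(v)\mu(w)$. Edge density $\delta(G)=\mu(\mathcal{E})/(\mu(\mathcal{V})\mu(\mathcal{W}))$ if $\mathcal{E}\ne\emptyset$, else $0$. For $\theta\ge1$, $\mu^{(\theta)}(G)=\delta(G)^\theta\mu(\mathcal{V})\mu(\mathcal{W})$. A subgraph of $G$ is $(\mu,\mathcal{V}',\mathcal{W}',\mathcal{E}')$ with $\mathcal{V}'\subseteq\mathcal{V}$, $\mathcal{W}'\subseteq\mathcal{W}$, $\mathcal{E}'\subseteq\mathcal{E}\cap(\mathcal{V}'\times\mathcal{W}')$. $G$ is $\theta$-maximal if $\mu^{(\theta)}(G)\ge\mu^{(\theta)}(G')$ for every subgraph $G'$. Neighbourhoods: $\Gamma_G(v)=\{w\in\mathcal{W}:(v,w)\in\mathcal{E}\}$ for $v\in\mathcal{V}$ and $\Gamma_G(w)=\{v\in\mathcal{V}:(v,w)\in\mathcal{E}\}$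 for $w\in\mathcal{W}$. $G$ is $\eta$-connected if $\mu(\Gamma_G(v))\ge\eta\,\mu(\mathcal{W})$ for all $v\in\mathcal{V}$ and $\mu(\Gamma_G(w))\ge\eta\,\mu(\mathcal{V})$ for all $w\in\mathcal{W}$. *)

From HB Require Import structures.
From mathcomp Require Import all_boot all_order all_algebra.
From mathcomp Require Import finmap.
From mathcomp Require Import reals exp.
Set Implicit Arguments. Unset Strict Implicit. Unset Printing Implicit Defensive.
Import Order.TTheory GRing.Theory Num.Theory.
Local Open Scope ring_scope.
Local Open Scope fset_scope.

Section Defs.
Variable R : realType.
Implicit Types (mu : R -> R) (V W : {fset R}) (E : {fset R * R}).

Definition muS mu V : R := \sum_(v <- V) mu v.
Definition muE mu E : R := \sum_(e <- E) mu e.1 * mu e.2.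

Definition wbgraph mu V W E : Prop :=
  (forall x : R, 0 < x -> 0 < mu x) /\
  (forall v, v \in V -> 0 < v) /\ (forall w, w \in W -> 0 < w) /\
  (forall e, e \in E -> e.1 \in V /\ e.2 \in W).

Definition density mu V W E : R :=
  if E == fset0 then 0 else muE mu E / (muS mu V * muS mu W).

Definition mu_theta (theta : R) mu V W E : R :=
  powR (density mu V W E) theta * muS mu V * muS mu W.

Definition subgraph V' W' E' V W E : Prop :=
  V' `<=` V /\ W' `<=` W /\ E' `<=` E /\
  (forall e, e \in E' -> e.1 \in V' /\ e.2 \in W').

Definition theta_maximal (theta : R) mu V W E : Prop :=
  forall V' W' E', subgraph V' W' E' V W E ->
    mu_theta theta mu V' W' E' <= mu_theta theta mu V W E.

Definition nbhdV V W E (v : R) : {fset R} := [fset w in W | (v, w) \in E].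
Definition nbhdW V W E (w : R) : {fset R} := [fset v in V | (v, w) \in E].

Definition eta_connected (eta : R) mu V W E : Prop :=
  (forall v, v \in V -> eta * muS mu W <= muS mu (nbhdV V W E v)) /\
  (forall w, w \in W -> eta * muS mu V <= muS mu (nbhdW V W E w)).
End Defs.

From HB Require Import structures.
From mathcomp Require Import all_boot all_order all_algebra.
From mathcomp Require Import finmap.
From mathcomp Require Import interval_inference reals exp convex.
From mathcomp Require Import ring lra.
Set Implicit Arguments. Unset Strict Implicit. Unset Printing Implicit Defensive.
Import Order.TTheory GRing.Theory Num.Theory.
Local Open Scope fset_scope.
Local Open Scope ring_scope.

(* Deleting a vertex v of weight a whose neighbourhood has mass d removes mass a
   from its side and a d from the edges. With c = (theta - 1) / theta,
   s = mu(V - v) / mu(V) and r = mu(E') / mu(E), the ratio of the new to the old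
   value of mu^(theta) is r^theta / s^(theta - 1), and concavity of ln gives
   c ln s <= ln (c s + 1 - c), which is < ln r as soon as d < c delta mu(W).
   So theta-maximality forces d >= c delta mu(W) for every vertex of V; the
   vertices of W are handled by transposing the graph. *)

Section ThetaMass.
Variable R : realType.

Lemma concave_ln1 (c x : R) :
  0 <= c <= 1 -> 0 < x -> c * ln x <= ln (c * x + (1 - c)).
Proof.
move=> /andP[c0 c1] x0.
have := @concave_ln R (Itv01 c0 c1) x 1 x0 ltr01.
by rewrite !convRE /= ln1 mulr0 addr0 mulr1.
Qed.

Lemma subr1_div_itv01 (theta : R) : 1 < theta -> 0 <= (theta - 1) / theta <= 1.
Proof.
move=> th1; have th0 : 0 < theta by lra.
by rewrite divr_ge0 ?ler_pdivrMr ?mul1r /=; lra.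
Qed.

Definition theta_mass (theta M S T : R) : R := powR (M / (S * T)) theta * S * T.

Lemma theta_mass_gt0 theta (M S T : R) :
  0 < M -> 0 < S -> 0 < T -> 0 < theta_mass theta M S T.
Proof. by move=> *; rewrite !mulr_gt0 ?powR_gt0 ?divr_gt0 ?mulr_gt0. Qed.

Lemma ln_theta_mass theta (M S T : R) : 0 < M -> 0 < S -> 0 < T ->
  ln (theta_mass theta M S T) = theta * ln M - (theta - 1) * (ln S + ln T).
Proof.
move=> M0 S0 T0; have ST0 : 0 < S * T by rewrite mulr_gt0.
rewrite /theta_mass !lnM ?posrE ?mulr_gt0 ?powR_gt0 ?divr_gt0 //.
by rewrite ln_powR ln_div ?lnM ?posrE //; ring.
Qed.

Lemma deletion_edge_mass_gt0 (c M S a d : R) :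
  0 <= c <= 1 -> 0 <= S -> 0 <= a -> 0 <= d ->
  d * (S + a) < c * (M + a * d) -> 0 < M.
Proof.
move=> /andP[c0 c1] S0 a0 d0 small.
have dS0 : 0 <= d * S by rewrite mulr_ge0.
have cad : c * (a * d) <= a * d by rewrite ler_piMl ?mulr_ge0.
rewrite ltNge; apply/negP => M0.
have := mulr_ge0_le0 c0 M0; lra.
Qed.

Lemma deletion_log_gain (c M S a d : R) :
  0 <= c <= 1 -> 0 < M -> 0 < S -> 0 < a -> 0 <= d ->
  d * (S + a) < c * (M + a * d) ->
  c * (ln S - ln (S + a)) < ln M - ln (M + a * d).
Proof.
move=> /andP[c0 c1] M0 S0 a0 d0 small.
have Sa0 : 0 < S + a by rewrite addr_gt0.
have Mad0 : 0 < M + a * d by have := mulr_ge0 (ltW a0) d0; lra.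
have s0 : 0 < S / (S + a) by rewrite divr_gt0.
rewrite -!ln_div ?posrE //.
apply: le_lt_trans (concave_ln1 _ s0) _; first by rewrite c0 c1.
rewrite ltr_ln ?posrE ?divr_gt0 //; last first.
  have s1 : S / (S + a) <= 1 by rewrite ler_pdivrMr // mul1r lerDl ltW.
  have : 0 <= (1 - c) * (1 - S / (S + a)) by rewrite mulr_ge0 ?subr_ge0.
  nra.
rewrite -subr_gt0.
have -> : M / (M + a * d) - (c * (S / (S + a)) + (1 - c)) =
          a * (c * (M + a * d) - d * (S + a)) / ((M + a * d) * (S + a)).
  by field; rewrite !gt_eqF.
by rewrite divr_gt0 ?mulr_gt0 // subr_gt0.
Qed.

Lemma theta_mass_deletion_gain theta (M S T a d : R) :
  1 < theta -> 0 < M -> 0 < S -> 0 < T -> 0 < a -> 0 <= d ->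
  d * (S + a) < (theta - 1) / theta * (M + a * d) ->
  theta_mass theta (M + a * d) (S + a) T < theta_mass theta M S T.
Proof.
move=> th1 M0 S0 T0 a0 d0 small.
have th0 : 0 < theta by lra.
have Sa0 : 0 < S + a by rewrite addr_gt0.
have Mad0 : 0 < M + a * d by have := mulr_ge0 (ltW a0) d0; lra.
rewrite -ltr_ln ?posrE ?theta_mass_gt0 // !ln_theta_mass //.
have := deletion_log_gain (subr1_div_itv01 th1) M0 S0 a0 d0 small.
rewrite -(ltr_pM2l th0) mulrA mulrCA divff ?gt_eqF // mulr1.
lra.
Qed.

End ThetaMass.

Section WeightedBipartiteGraph.
Variables (R : realType) (mu : R -> R).
Implicit Types (T V W : {fset R}) (E : {fset R * R}).

Lemma muS_ge0 T : {in T, forall x, 0 <= mu x} -> 0 <= muS mu T.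
Proof. by move=> mu_ge0; rewrite /muS big_seq sumr_ge0. Qed.

Lemma muS_gt0 T x : {in T, forall y, 0 < mu y} -> x \in T -> 0 < muS mu T.
Proof.
move=> mu_gt0 xT; rewrite /muS (big_fsetD1 x) //= ltr_pwDl ?mu_gt0 //.
by apply: muS_ge0 => y; rewrite in_fsetD1 => /andP[_ /mu_gt0 /ltW].
Qed.

Lemma muS_fsetD1 T x : x \in T -> muS mu T = muS mu (T `\ x) + mu x.
Proof. by move=> xT; rewrite /muS (big_fsetD1 x) //= addrC. Qed.

Lemma muE_neq0 E : muE mu E != 0 -> E != fset0.
Proof. by apply: contraNneq => ->; rewrite /muE big_seq_fset0. Qed.

Lemma muE_nbhdV V W E v : (forall e, e \in E -> e.2 \in W) ->
  muE mu E = muE mu [fset e in E | e.1 != v] + mu v * muS mu (nbhdV V W E v).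
Proof.
move=> EW; rewrite /muE (big_fsetID _ (fun e : R * R => e.1 == v)) /= addrC.
congr (_ + _); set Ev := [fset e in E | e.1 == v].
have -> : nbhdV V W E v = [fset e.2 | e in Ev].
  apply/fsetP => w; rewrite !inE /=; apply/idP/imfsetP => [/andP[wW vwE]|].
    by exists (v, w); rewrite //= !inE vwE eqxx.
  case=> -[x y]; rewrite inE /= => /andP[xyE /eqP xv] ->.
  by rewrite -xv xyE (EW _ xyE).
rewrite /muS [in RHS]big_imfset /=; last first.
  by move=> [x y] [x' y']; rewrite !inE /= => /andP[_ /eqP ->] /andP[_ /eqP ->] ->.
by rewrite big_distrr; apply: eq_fbigr => e; rewrite inE => /andP[_ /eqP ->].
Qed.

Lemma subgraph_deleteV V W E v : (forall e, e \in E -> e.1 \in V /\ e.2 \in W) ->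
  subgraph (V `\ v) W [fset e in E | e.1 != v] V W E.
Proof.
move=> ends; split; [exact: fsubsetDl | split; [exact: fsubset_refl | split]].
  by apply/fsubsetP => e; rewrite inE => /andP[].
by move=> e; rewrite !inE => /andP[/ends [-> ->] ->].
Qed.

Lemma mu_theta_mass theta V W E : E != fset0 ->
  mu_theta theta mu V W E = theta_mass theta (muE mu E) (muS mu V) (muS mu W).
Proof. by move=> E_neq0; rewrite /mu_theta /density (negbTE E_neq0). Qed.

Definition transposeE E : {fset R * R} := [fset (e.2, e.1) | e in E].

Lemma mem_transposeE E e : (e \in transposeE E) = ((e.2, e.1) \in E).
Proof.
apply/imfsetP/idP => [[[x y] xyE ->] //|eE].
by exists (e.2, e.1); last by case: e eE.
Qed.

Lemma transposeEK : involutive transposeE.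
Proof. by move=> E; apply/fsetP => e; rewrite !mem_transposeE; case: e. Qed.

Lemma transposeE_eq0 E : (transposeE E == fset0) = (E == fset0).
Proof.
apply/eqP/eqP => [E'0|->]; last exact: imfset0.
by rewrite -[E]transposeEK E'0; exact: imfset0.
Qed.

Lemma muE_transpose E : muE mu (transposeE E) = muE mu E.
Proof.
rewrite /muE big_imfset /=; last by move=> [x y] [x' y'] _ _ [-> ->].
by apply: eq_bigr => e _; rewrite mulrC.
Qed.

Lemma density_transpose V W E :
  density mu W V (transposeE E) = density mu V W E.
Proof. by rewrite /density transposeE_eq0 muE_transpose [muS _ W * _]mulrC. Qed.

Lemma mu_theta_transpose theta V W E :
  mu_theta theta mu W V (transposeE E) = mu_theta theta mu V W E.
Proof. by rewrite /mu_theta density_transpose -!mulrA [muS _ W * _]mulrC. Qed.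

Lemma subgraph_transpose V' W' E' V W E : subgraph V' W' E' V W E ->
  subgraph W' V' (transposeE E') W V (transposeE E).
Proof.
move=> [V'V [W'W [E'E ends']]]; split=> //; split=> //; split.
  by apply/fsubsetP => e; rewrite !mem_transposeE; apply: (fsubsetP E'E).
by move=> e; rewrite mem_transposeE => /ends' [].
Qed.

Lemma theta_maximal_transpose theta V W E : theta_maximal theta mu V W E ->
  theta_maximal theta mu W V (transposeE E).
Proof.
move=> Gmax W' V' E' /subgraph_transpose; rewrite transposeEK => /Gmax.
by rewrite -[E' in X in X <= _]transposeEK !mu_theta_transpose.
Qed.

Lemma wbgraph_transpose V W E : wbgraph mu V W E -> wbgraph mu W V (transposeE E).
Proof.
move=> [mu_gt0 [V_gt0 [W_gt0 ends]]]; split=> //; split=> //; split=> // e.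
by rewrite mem_transposeE => /ends [].
Qed.

Lemma nbhdW_transpose V W E w : nbhdW V W E w = nbhdV W V (transposeE E) w.
Proof. by apply/fsetP => x; rewrite !inE mem_transposeE. Qed.

Lemma theta_maximal_nbhdV theta V W E v :
  wbgraph mu V W E -> 0 < density mu V W E -> 1 < theta ->
  theta_maximal theta mu V W E -> v \in V ->
  (theta - 1) / theta * density mu V W E * muS mu W <= muS mu (nbhdV V W E v).
Proof.
move=> [mu_gt0 [V_gt0 [W_gt0 ends]]] dens_gt0 th1 Gmax vV.
have E_neq0 : E != fset0.
  by move: dens_gt0; rewrite /density; case: eqP => // _; rewrite ltxx.
have [e0 e0E] := fset0Pn _ E_neq0.
have muV : {in V, forall x, 0 < mu x} by move=> x /V_gt0 /mu_gt0.
have muW : {in W, forall x, 0 < mu x} by move=> x /W_gt0 /mu_gt0.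
have SV_gt0 := muS_gt0 muV (ends _ e0E).1.
have SW_gt0 := muS_gt0 muW (ends _ e0E).2.
have c01 := subr1_div_itv01 th1.
set c := (theta - 1) / theta in c01 *; set d := muS mu (nbhdV V W E v).
set V' := V `\ v; set E' := [fset e in E | e.1 != v].
have SV_split : muS mu V = muS mu V' + mu v by exact: muS_fsetD1.
have ME_split : muE mu E = muE mu E' + mu v * d.
  by apply: muE_nbhdV => e /ends [].
rewrite leNgt; apply/negP => small.
have {}small : d * (muS mu V' + mu v) < c * (muE mu E' + mu v * d).
  rewrite -SV_split -ME_split -ltr_pdivlMr //; move: small.
  rewrite /density (negbTE E_neq0).
  rewrite [X in _ < X -> _](_ : _ = c * muE mu E / muS mu V) //.
  by field; rewrite !gt_eqF.
have d_ge0 : 0 <= d by apply: muS_ge0 => x; rewrite inE => /andP[/muW /ltW].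
have SV'_ge0 : 0 <= muS mu V'.
  by apply: muS_ge0 => x; rewrite inE => /andP[_ /muV /ltW].
have ME'_gt0 := deletion_edge_mass_gt0 c01 SV'_ge0 (ltW (muV _ vV)) d_ge0 small.
have E'_neq0 := muE_neq0 (lt0r_neq0 ME'_gt0).
have [e eE'] := fset0Pn _ E'_neq0.
have SV'_gt0 : 0 < muS mu V'.
  apply: (muS_gt0 (x := e.1)) => [x|]; first by rewrite inE => /andP[_ /muV].
  by move: eE'; rewrite !inE => /andP[/ends [-> _] ->].
have := Gmax _ _ _ (subgraph_deleteV v ends).
rewrite !mu_theta_mass // SV_split ME_split leNgt => /negP; apply.
exact: theta_mass_deletion_gain th1 ME'_gt0 SV'_gt0 SW_gt0 (muV _ vV) d_ge0 small.
Qed.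

End WeightedBipartiteGraph.

Theorem lemma5p9 (R : realType) (mu : R -> R) (V W : {fset R}) (E : {fset R * R})
  (theta : R) :
  wbgraph mu V W E ->
  0 < density mu V W E ->
  1 < theta ->
  theta_maximal theta mu V W E ->
  eta_connected ((theta - 1) / theta * density mu V W E) mu V W E.
Proof.
move=> G dens_gt0 th1 Gmax; split=> [v vV | w wW].
  exact: theta_maximal_nbhdV.
rewrite nbhdW_transpose -density_transpose.
apply: theta_maximal_nbhdV => //.
- exact: wbgraph_transpose.
- by rewrite density_transpose.
- exact: theta_maximal_transpose.
Qed.
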